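(* Let $k$ be a field, $\kappa$ an infinite cardinal and $R=k^\kappa$. Let $\mathcal{G}$ be the filter of ideals of $R$ with filter basis the principal ideals $aR$, where $a\in k^\kappa$ has cofinite support in $\kappa$ (this is a Gabriel filter of finite type), and let $A=k^{(\kappa)}\subseteq R$ (elements of finite support). Then $R/A$ is a silting $R$-module with $\operatorname{Gen}(R/A)=\operatorname{Div}\mathcal{G}$, and $R/A$ is finitely generated but not finitely presented (in particular not projective).
   Context: $\operatorname{Gen}T$: epimorphic images of direct sums of copies of $T$. For $\alpha:A\to B$, $\mathcal{D}_\alpha=\{X\mid\operatorname{Hom}_R(\alpha,X)\text{ surjective}\}$. A module $T$ is silting if it has a projective presentation $P_{-1}\xrightarrow{\sigma}P_0\to T\to0$ with $\operatorname{Gen}T=\mathcal{D}_\sigma$. $\operatorname{Div}\mathcal{G}=\{M\mid MI=M\ \forall I\in\mathcal{G}\}$. *)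

From HB Require Import structures.
From mathcomp Require Import all_boot all_algebra.
From Stdlib Require List.
From Stdlib Require Import FunctionalExtensionality ProofIrrelevance.

Set Implicit Arguments. Unset Strict Implicit. Unset Printing Implicit Defensive.
Import GRing.Theory.

Record SRing := {
  rcar :> Type;
  rzero : rcar; rone : rcar;
  radd : rcar -> rcar -> rcar; ropp : rcar -> rcar; rmul : rcar -> rcar -> rcar;
  raddA : forall x y z, radd x (radd y z) = radd (radd x y) z;
  raddC : forall x y, radd x y = radd y x;
  radd0 : forall x, radd rzero x = x;
  raddN : forall x, radd (ropp x) x = rzero;
  rmulA : forall x y z, rmul x (rmul y z) = rmul (rmul x y) z;
  rmul1l : forall x, rmul rone x = x;
  rmul1r : forall x, rmul x rone = x;
  rmulDl : forall x y z, rmul (radd x y) z = radd (rmul x z) (rmul y z);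
  rmulDr : forall x y z, rmul x (radd y z) = radd (rmul x y) (rmul x z) }.
Arguments rzero {s}. Arguments rone {s}. Arguments radd {s}. Arguments ropp {s}.
Arguments rmul {s}.

Record SMod (R : SRing) := {
  mcar :> Type;
  mzero : mcar; madd : mcar -> mcar -> mcar; mopp : mcar -> mcar;
  mscal : R -> mcar -> mcar;
  maddA : forall x y z, madd x (madd y z) = madd (madd x y) z;
  maddC : forall x y, madd x y = madd y x;
  madd0 : forall x, madd mzero x = x;
  maddN : forall x, madd (mopp x) x = mzero;
  mscalDr : forall r x y, mscal r (madd x y) = madd (mscal r x) (mscal r y);
  mscalDl : forall r s x, mscal (radd r s) x = madd (mscal r x) (mscal s x);
  mscalA : forall r s x, mscal (rmul r s) x = mscal r (mscal s x);
  mscal1 : forall x, mscal rone x = x }.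
Arguments mzero {R s0} : rename. Arguments madd {R s0} : rename.
Arguments mopp {R s0} : rename. Arguments mscal {R s0} : rename.

Section Generic.
Variable R : SRing.

Definition Rlinear (M N : SMod R) (f : M -> N) : Prop :=
  (forall x y, f (madd x y) = madd (f x) (f y)) /\
  (forall r x, f (mscal r x) = mscal r (f x)).

Definition Rsurjective (A B : Type) (f : A -> B) : Prop := forall y, exists x, f x = y.

Definition regmod : SMod R :=
  {| mcar := rcar R; mzero := rzero; madd := radd; mopp := ropp; mscal := rmul;
     maddA := @raddA R; maddC := @raddC R; madd0 := @radd0 R; maddN := @raddN R;
     mscalDr := @rmulDr R; mscalDl := @rmulDl R;
     mscalA := fun r s x => Logic.eq_sym (@rmulA R r s x); mscal1 := @rmul1l R |}.

Section DSum.
Variables (M : SMod R) (I : Type).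

Definition fsupp (f : I -> M) : Prop :=
  exists s : list I, forall i, ~ List.In i s -> f i = mzero.

Lemma sig_ext (A : Type) (P : A -> Prop) (x y : sig P) :
  proj1_sig x = proj1_sig y -> x = y.
Proof. destruct x as [x px], y as [y py]; simpl; intros ->; f_equal; apply proof_irrelevance. Qed.

Definition dcar := {f : I -> M | fsupp f}.

Lemma fsupp0 : fsupp (fun _ => mzero).
Proof. exists nil; auto. Qed.
Lemma fsuppD (f g : I -> M) : fsupp f -> fsupp g -> fsupp (fun i => madd (f i) (g i)).
Proof.
intros [s1 H1] [s2 H2]; exists (s1 ++ s2)%list; intros i Hi.
rewrite H1 ?H2 ?madd0 //; intro; apply: Hi; apply List.in_or_app; auto.
Qed.
Lemma fsuppN (f : I -> M) : fsupp f -> fsupp (fun i => mopp (f i)).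
Proof.
intros [s H]; exists s; intros i Hi; rewrite H //.
by rewrite -[LHS](madd0 (mopp (@mzero R M))) maddC maddN.
Qed.
Lemma fsuppZ r (f : I -> M) : fsupp f -> fsupp (fun i => mscal r (f i)).
Proof.
intros [s H]; exists s; intros i Hi; rewrite H //.
have h := mscalDr r (@mzero R M) mzero; rewrite madd0 in h.
have h2 := f_equal (madd (mopp (mscal r mzero))) h.
by rewrite maddN maddA maddN madd0 in h2.
Qed.

Definition dzero : dcar := exist _ _ fsupp0.
Definition dadd (x y : dcar) : dcar := exist _ _ (fsuppD (proj2_sig x) (proj2_sig y)).
Definition dopp (x : dcar) : dcar := exist _ _ (fsuppN (proj2_sig x)).
Definition dscal r (x : dcar) : dcar := exist _ _ (fsuppZ r (proj2_sig x)).

Ltac dext := intros; apply sig_ext; simpl; apply functional_extensionality; intro.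

Lemma daddA x y z : dadd x (dadd y z) = dadd (dadd x y) z. Proof. dext; apply maddA. Qed.
Lemma daddC x y : dadd x y = dadd y x. Proof. dext; apply maddC. Qed.
Lemma dadd0 x : dadd dzero x = x. Proof. dext; apply madd0. Qed.
Lemma daddN x : dadd (dopp x) x = dzero. Proof. dext; apply maddN. Qed.
Lemma dscalDr r x y : dscal r (dadd x y) = dadd (dscal r x) (dscal r y). Proof. dext; apply mscalDr. Qed.
Lemma dscalDl r s x : dscal (radd r s) x = dadd (dscal r x) (dscal s x). Proof. dext; apply mscalDl. Qed.
Lemma dscalA r s x : dscal (rmul r s) x = dscal r (dscal s x). Proof. dext; apply mscalA. Qed.
Lemma dscal1 x : dscal rone x = x. Proof. dext; apply mscal1. Qed.

Definition dsum : SMod R :=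
  {| mcar := dcar; mzero := dzero; madd := dadd; mopp := dopp; mscal := dscal;
     maddA := daddA; maddC := daddC; madd0 := dadd0; maddN := daddN;
     mscalDr := dscalDr; mscalDl := dscalDl; mscalA := dscalA; mscal1 := dscal1 |}.
End DSum.

Definition Gen (T X : SMod R) : Prop :=
  exists (I : Type) (g : dsum T I -> X), Rlinear g /\ Rsurjective g.

(* D_sigma = { X | Hom(sigma, X) Rsurjective } *)
Definition Dsig (A B : SMod R) (sigma : A -> B) (X : SMod R) : Prop :=
  forall h : A -> X, Rlinear h ->
    exists g : B -> X, Rlinear g /\ forall a, g (sigma a) = h a.

Definition projective (P : SMod R) : Prop :=
  forall (M N : SMod R) (g : M -> N) (h : P -> N),
    Rlinear g -> Rsurjective g -> Rlinear h ->
    exists h' : P -> M, Rlinear h' /\ forall x, g (h' x) = h x.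

Definition silting (T : SMod R) : Prop :=
  exists (P1 P0 : SMod R) (sigma : P1 -> P0) (eps : P0 -> T),
    Rlinear sigma /\ Rlinear eps /\ Rsurjective eps /\
    (forall y, eps y = mzero <-> exists x, sigma x = y) /\
    projective P1 /\ projective P0 /\
    (forall X : SMod R, Gen T X <-> Dsig sigma X).

Fixpoint rsum (n : nat) (f : nat -> R) : R :=
  match n with 0 => rzero | S n => radd (rsum n f) (f n) end.
Fixpoint mlc (M : SMod R) (n : nat) (c : nat -> R) (g : nat -> M) : M :=
  match n with 0 => mzero | S n => madd (mlc n c g) (mscal (c n) (g n)) end.

Definition finitely_generated (M : SMod R) : Prop :=
  exists (n : nat) (g : nat -> M), forall m : M, exists c, m = mlc n c g.

Definition finitely_presented (M : SMod R) : Prop :=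
  exists (n : nat) (g : nat -> M),
    (forall m : M, exists c, m = mlc n c g) /\
    exists (p : nat) (rels : nat -> nat -> R),
      (forall j, (j < p)%N -> mlc n (rels j) g = mzero) /\
      (forall c, mlc n c g = mzero ->
         exists s : nat -> R, forall i, (i < n)%N ->
           c i = rsum p (fun j => rmul (s j) (rels j i))).

Definition is_ideal (I : R -> Prop) : Prop :=
  I rzero /\ (forall x y, I x -> I y -> I (radd x y)) /\ (forall x, I x -> I (ropp x)) /\
  (forall r x, I x -> I (rmul r x) /\ I (rmul x r)).

Definition fg_ideal (I : R -> Prop) : Prop :=
  exists (n : nat) (g : nat -> R),
    forall x, I x <-> exists c : nat -> R, x = rsum n (fun i => rmul (g i) (c i)).

(* Gabriel filter (Stenstrom's axioms T1-T4, plus R in G) *)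
Definition gabriel_filter (G : (R -> Prop) -> Prop) : Prop :=
  (forall I, G I -> is_ideal I) /\
  G (fun _ => True) /\
  (forall I J, G I -> is_ideal J -> (forall x, I x -> J x) -> G J) /\
  (forall I J, G I -> G J -> G (fun x => I x /\ J x)) /\
  (forall I a, G I -> G (fun r => I (rmul a r))) /\
  (forall I J, G I -> is_ideal J -> (forall a, I a -> G (fun r => J (rmul a r))) -> G J).

Definition finite_type (G : (R -> Prop) -> Prop) : Prop :=
  forall I, G I -> exists J, G J /\ fg_ideal J /\ (forall x, J x -> I x).

Definition MI_eq_M (M : SMod R) (I : R -> Prop) : Prop :=
  forall m : M, exists l : list (R * M),
    (forall p, List.In p l -> I (fst p)) /\
    m = List.fold_right (fun p acc => madd (mscal (fst p) (snd p)) acc) mzero l.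

Definition Div (G : (R -> Prop) -> Prop) (M : SMod R) : Prop :=
  forall I, G I -> MI_eq_M M I.

End Generic.

Section Prod.
Variables (K : Type) (k : fieldType).
Local Open Scope ring_scope.

Ltac fext := intros; apply functional_extensionality; intro.

Definition prodRing : SRing.
refine {| rcar := K -> k; rzero := fun _ => 0; rone := fun _ => 1;
          radd := fun f g i => f i + g i; ropp := fun f i => - f i;
          rmul := fun f g i => f i * g i |}; fext.
- by rewrite addrA.
- by rewrite addrC.
- by rewrite add0r.
- by rewrite addNr.
- by rewrite mulrA.
- by rewrite mul1r.
- by rewrite mulr1.
- by rewrite mulrDl.
- by rewrite mulrDr.
Defined.

Definition infinite_type (X : Type) : Prop := ~ exists s : list X, forall x, List.In x s.

Definition finite_support (a : K -> k) : Prop :=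
  exists s : list K, forall x, ~ List.In x s -> a x = 0.
Definition cofinite_support (a : K -> k) : Prop :=
  exists s : list K, forall x, ~ List.In x s -> a x != 0.

Definition Gcof (I : prodRing -> Prop) : Prop :=
  is_ideal I /\ exists a : prodRing, cofinite_support a /\ forall r, I (rmul a r).
End Prod.

(* Let A = k^(kappa) be the socle of R = k^kappa.  All three classes of modules in the theorem
   are the class of R-modules X with A X = 0.  For Gen (R/A) this is the statement that such X
   are exactly the quotients of free R/A-modules.  For Div G: a cofinite-support a is a unit
   modulo A, so aX = X when A X = 0; conversely the ideal (1 - e_F) R is in G for every finite
   F, and X = (1 - e_F) X forces e_F X = 0.  For the presentation A (+) A -> R -> R/A which
   includes the first copy of A and kills the second, Hom(sigma, X) is onto iff Hom(A, X) = 0,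
   i.e. iff A X = 0. *)

From mathcomp Require Import all_boot all_algebra.
From Stdlib Require Import ClassicalEpsilon Classical FunctionalExtensionality Permutation.
From Stdlib Require List.
Import List (In, in_or_app).
Set Implicit Arguments. Unset Strict Implicit. Unset Printing Implicit Defensive.
Import GRing.Theory.

Notation dec := excluded_middle_informative.

Section ModuleFacts.
Variables (R : SRing) (M : SMod R).

Lemma madd0r (x : M) : madd x mzero = x.
Proof. by rewrite maddC madd0. Qed.

Lemma madd_cancel (a x y : M) : madd a x = madd a y -> x = y.
Proof. by move=> /(f_equal (madd (mopp a))); rewrite !maddA maddN !madd0. Qed.

Lemma mscalr0 r : mscal r (@mzero R M) = mzero.
Proof. by apply: (@madd_cancel (mscal r mzero)); rewrite -mscalDr !madd0r. Qed.

Lemma mscal0r (x : M) : mscal rzero x = mzero.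
Proof. by apply: (@madd_cancel (mscal rzero x)); rewrite -mscalDl madd0r radd0. Qed.

Lemma maddACA (a b c d : M) : madd (madd a b) (madd c d) = madd (madd a c) (madd b d).
Proof. by rewrite -!maddA (maddA b c d) (maddC b c) -(maddA c b d). Qed.
End ModuleFacts.

Lemma Rlinear0 (R : SRing) (M N : SMod R) (f : M -> N) : Rlinear f -> f mzero = mzero.
Proof. by move=> [fD _]; apply: (@madd_cancel _ _ (f mzero)); rewrite -fD !madd0r. Qed.

Definition upd (I V : Type) (f : I -> V) (i : I) (v : V) : I -> V :=
  fun j => if dec (j = i) then v else f j.

Definition single (I V : Type) (z : V) (i : I) (v : V) : I -> V := upd (fun _ => z) i v.

Definition vanish (I V : Type) (z : V) (f : I -> V) (s : list I) : Prop :=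
  forall j, ~ In j s -> f j = z.

Definition finsupp (I V : Type) (z : V) (f : I -> V) : Prop := exists s, vanish z f s.

Lemma vanish_catl (I V : Type) (z : V) (f : I -> V) s t : vanish z f s -> vanish z f (s ++ t).
Proof. by move=> h j hj; apply: h => hh; apply: hj; apply: in_or_app; left. Qed.

Lemma vanish_catr (I V : Type) (z : V) (f : I -> V) s t : vanish z f t -> vanish z f (s ++ t).
Proof. by move=> h j hj; apply: h => hh; apply: hj; apply: in_or_app; right. Qed.

Section FinSum.
Variables (R : SRing) (N : SMod R) (I V : Type) (z : V) (psi : I -> V -> N).

(* Each summand is cleared after use, so repeated indices do not count twice. *)
Fixpoint lsum (s : list I) (f : I -> V) : N :=
  match s with nil => mzero | i :: s' => madd (psi i (f i)) (lsum s' (upd f i z)) end.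

Definition fsum (f : I -> V) : N := lsum (epsilon (inhabits nil) (vanish z f)) f.

Hypothesis psi0 : forall i, psi i z = mzero.

Lemma lsum_const s : lsum s (fun _ => z) = mzero.
Proof.
elim: s => //= i s IH.
have -> : upd (fun _ => z) i z = (fun _ => z).
  by apply: functional_extensionality => j; rewrite /upd; case: dec.
by rewrite IH psi0 madd0.
Qed.

Lemma lsum_swap x y s f : lsum (x :: y :: s) f = lsum (y :: x :: s) f.
Proof.
rewrite /=; case: (dec (x = y)) => [<-|nxy].
  have -> : upd (upd f x z) x z = upd f x z.
    by apply: functional_extensionality => j; rewrite /upd; case: dec.
  by rewrite /upd; case: dec => // _; rewrite psi0.
have -> : upd f x z y = f y by rewrite /upd; case: dec => // e; case: nxy.
have -> : upd f y z x = f x by rewrite /upd; case: dec.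
have -> : upd (upd f x z) y z = upd (upd f y z) x z.
  by apply: functional_extensionality => j; rewrite /upd; do 2 case: dec.
by rewrite !maddA (maddC (psi x (f x))).
Qed.

Lemma lsum_perm s t : Permutation s t -> forall f, lsum s f = lsum t f.
Proof.
elim => //.
- by move=> x l l' _ IH f /=; rewrite IH.
- by move=> x y l f; rewrite lsum_swap.
- by move=> l l' l'' _ IH1 _ IH2 f; rewrite IH1 IH2.
Qed.

Lemma lsum_cat s t f : vanish z f s -> lsum (s ++ t) f = lsum s f.
Proof.
elim: s f => [|i s IH] f /= hv.
  have -> : f = (fun _ => z) by apply: functional_extensionality => j; apply: hv.
  by rewrite !lsum_const.
rewrite IH // => j hj; rewrite /upd; case: dec => // nji; apply: hv.
by move=> [e|h]; [apply: nji|apply: hj].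
Qed.

Lemma lsum_indep s t f : vanish z f s -> vanish z f t -> lsum s f = lsum t f.
Proof.
move=> hs ht; rewrite -(lsum_cat t hs) -(lsum_cat s ht).
exact/lsum_perm/Permutation_app_comm.
Qed.

Lemma fsumE s f : vanish z f s -> fsum f = lsum s f.
Proof.
move=> hs; apply: (lsum_indep _ hs).
by apply: epsilon_spec; exists s.
Qed.

Lemma fsum_single i v : fsum (single z i v) = psi i v.
Proof.
have hv : vanish z (single z i v) [:: i].
  by move=> j hj; rewrite /single /upd; case: dec => // e; case: hj; left.
rewrite (fsumE hv) /= madd0r.
by rewrite /single /upd; case: dec.
Qed.

Lemma fsumD (vadd : V -> V -> V) f g :
  vadd z z = z -> (forall i u v, psi i (vadd u v) = madd (psi i u) (psi i v)) ->
  finsupp z f -> finsupp z g ->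
  fsum (fun j => vadd (f j) (g j)) = madd (fsum f) (fsum g).
Proof.
move=> hz hadd [s hs] [t ht].
have hst : vanish z (fun j => vadd (f j) (g j)) (s ++ t).
  move=> j hj; rewrite (vanish_catl (t := t) hs) // (vanish_catr (s := s) ht) //.
rewrite (fsumE hst) (fsumE (vanish_catl (t := t) hs)) (fsumE (vanish_catr (s := s) ht)).
elim: (s ++ t) f g {hs ht hst} => [|i l IH] f g /=; first by rewrite madd0.
have -> : upd (fun j => vadd (f j) (g j)) i z = (fun j => vadd (upd f i z j) (upd g i z j)).
  by apply: functional_extensionality => j; rewrite /upd; case: dec.
by rewrite IH hadd maddACA.
Qed.

Lemma fsumZ (lam : I -> V -> V) r f :
  (forall i, lam i z = z) -> (forall i v, psi i (lam i v) = mscal r (psi i v)) ->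
  finsupp z f -> fsum (fun j => lam j (f j)) = mscal r (fsum f).
Proof.
move=> hz hs [s hv].
have hlv : vanish z (fun j => lam j (f j)) s by move=> j hj; rewrite hv.
rewrite (fsumE hlv) (fsumE hv).
elim: s f {hv hlv} => [|i s IH] f /=; first by rewrite mscalr0.
have -> : upd (fun j => lam j (f j)) i z = (fun j => lam j (upd f i z j)).
  by apply: functional_extensionality => j; rewrite /upd; case: dec => // ->.
by rewrite IH hs mscalDr.
Qed.
End FinSum.

Lemma lsum_map (R : SRing) (N N' : SMod R) (I V : Type) (z : V) (psi : I -> V -> N)
   (G : N -> N') : Rlinear G -> forall s f,
  G (lsum z psi s f) = lsum z (fun i v => G (psi i v)) s f.
Proof.
move=> hG; elim => [|i s IH] f /=; first exact: Rlinear0.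
by rewrite (proj1 hG) IH.
Qed.


Lemma fsum_map (R : SRing) (N N' : SMod R) (I V : Type) (z : V) (psi : I -> V -> N)
  (G : N -> N') f : Rlinear G -> G (fsum z psi f) = fsum z (fun i v => G (psi i v)) f.
Proof. by move=> hG; apply: lsum_map. Qed.

Section Ideals.
Variable R : SRing.

Lemma is_ideal_full : is_ideal (fun _ : R => True).
Proof. by []. Qed.

Lemma is_ideal_meet (I J : R -> Prop) :
  is_ideal I -> is_ideal J -> is_ideal (fun x => I x /\ J x).
Proof.
move=> [I0 [ID [IN IM]]] [J0 [JD [JN JM]]].
split; first by []; split; first by move=> x y [? ?] [? ?]; split; auto.
split; first by move=> x [? ?]; split; auto.
by move=> r x [hI hJ]; have := IM r x hI; have := JM r x hJ; tauto.
Qed.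
End Ideals.

Local Open Scope ring_scope.

Section ProductRing.
Variables (K : Type) (k : fieldType).
Notation R := (prodRing K k).

Lemma prod_mulC (a b : R) : rmul a b = rmul b a.
Proof. by apply: functional_extensionality => x /=; rewrite mulrC. Qed.

Lemma prod_mul0r (a : R) : rmul a rzero = rzero.
Proof. by apply: functional_extensionality => x /=; rewrite mulr0. Qed.

Lemma cofinite_support_mul (a b : R) :
  cofinite_support a -> cofinite_support b -> cofinite_support (rmul a b).
Proof.
move=> [s ha] [t hb]; exists (s ++ t)%list => x hx /=.
by rewrite mulf_neq0 // ?ha ?hb // => h; apply: hx; apply: in_or_app; auto.
Qed.

Lemma finite_support_mul (a r : R) : finite_support a -> finite_support (rmul a r).
Proof. by move=> [s h]; exists s => x hx /=; rewrite h ?mul0r. Qed.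

Lemma is_ideal_colon (I : R -> Prop) (a : R) :
  is_ideal I -> is_ideal (fun r => I (rmul a r)).
Proof.
move=> [I0 [ID [IN IM]]]; split; first by rewrite prod_mul0r.
split; first by move=> x y hx hy; rewrite rmulDr; apply: ID.
split.
  move=> x hx; have -> : rmul a (ropp x) = ropp (rmul a x).
    by apply: functional_extensionality => y /=; rewrite mulrN.
  exact: IN.
move=> r x hx; split; first by rewrite rmulA (prod_mulC a r) -rmulA; exact: (proj1 (IM _ _ hx)).
by rewrite rmulA; exact: (proj2 (IM _ _ hx)).
Qed.

Definition principal (a : R) : R -> Prop := fun x => exists r, x = rmul a r.

Lemma is_ideal_principal (a : R) : is_ideal (principal a).
Proof.
split; first by exists rzero; rewrite prod_mul0r.
split; first by move=> x y [r1 ->] [r2 ->]; exists (radd r1 r2); rewrite rmulDr.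
split.
  move=> x [r ->]; exists (ropp r).
  by apply: functional_extensionality => y /=; rewrite mulrN.
move=> r x [r1 ->]; split; first by exists (rmul r r1); rewrite rmulA (prod_mulC r a) rmulA.
by exists (rmul r1 r); rewrite rmulA.
Qed.

Lemma Gcof_principal (a : R) : cofinite_support a -> Gcof (principal a).
Proof. by move=> ha; split; [exact: is_ideal_principal | exists a; split => // r; exists r]. Qed.

Lemma Gcof_gabriel : gabriel_filter (@Gcof K k).
Proof.
split; first by move=> I [].
split.
  split; first exact: is_ideal_full.
  by exists rone; split => //; exists nil => x _; exact: oner_neq0.
split; first by move=> I J [_ [a [ha hI]]] hJ hIJ; split => //; exists a; split => // r; exact: hIJ.
split.
  move=> I J [hI [a [ha aI]]] [hJ [b [hb bJ]]]; split; first exact: is_ideal_meet.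
  exists (rmul a b); split; first exact: cofinite_support_mul.
  by move=> r; split; [rewrite -rmulA | rewrite (prod_mulC a b) -rmulA].
split.
  move=> I a [hI [b [hb bI]]]; split; first exact: is_ideal_colon.
  by exists b; split => // r; rewrite rmulA (prod_mulC a b) -rmulA.
move=> I J [hI [b [hb bI]]] hJ hIJ.
have Ib : I b by move: (bI rone); rewrite rmul1r.
have [_ [c [hc cJ]]] := hIJ b Ib.
split => //; exists (rmul b c); split; first exact: cofinite_support_mul.
by move=> r; rewrite -rmulA.
Qed.

Lemma Gcof_finite_type : finite_type (@Gcof K k).
Proof.
move=> I [hI [a [ha aI]]]; exists (principal a); split; first exact: Gcof_principal.
split; last by move=> x [r ->].
exists 1%N, (fun _ => a) => x; split.
  by move=> [r ->]; exists (fun _ => r); apply: functional_extensionality => y /=; rewrite add0r.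
by move=> [c ->]; exists (c 0%N); apply: functional_extensionality => y /=; rewrite add0r.
Qed.
End ProductRing.

Lemma vanish_single (I V : Type) (z : V) (i : I) (v : V) : vanish z (single z i v) [:: i].
Proof. by move=> j hj; rewrite /single /upd; case: dec => // e; case: hj; left. Qed.

Lemma single_eq0 (I V : Type) (z : V) (i : I) : single z i z = (fun _ => z).
Proof. by apply: functional_extensionality => j; rewrite /single /upd; case: dec. Qed.

Section ProductRingModules.
Variables (K : Type) (k : fieldType).
Notation R := (prodRing K k).

Definition annihilated (X : SMod R) : Prop :=
  forall a : R, finite_support a -> forall m : X, mscal a m = mzero.

Lemma annihilated_scal (X : SMod R) (u v : R) (m : X) : annihilated X ->
  finite_support (radd u (ropp v)) -> mscal u m = mscal v m.
Proof.
move=> hX huv; have -> : u = radd (radd u (ropp v)) v.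
  by apply: functional_extensionality => x /=; rewrite addrNK.
by rewrite mscalDl hX // madd0.
Qed.

Lemma single_add (x : K) (u v : k) :
  (single 0 x (u + v) : R) = radd (single 0 x u : R) (single 0 x v).
Proof.
by apply: functional_extensionality => y /=; rewrite /single /upd; case: dec => _ /=; rewrite ?addr0.
Qed.

Lemma single_mul (r : R) (x : K) (c : k) : rmul r (single 0 x c : R) = single 0 x (r x * c).
Proof.
by apply: functional_extensionality => y /=; rewrite /single /upd; case: dec => [e|_] /=; [rewrite e | rewrite mulr0].
Qed.

Lemma single_finite_support (x : K) (c : k) : finite_support (single 0 x c : R).
Proof. exists [:: x]; exact: vanish_single. Qed.

Lemma regular_projective : projective (regmod R).
Proof.
move=> M N g h gl gs hl; have [m hm] := gs (h rone).
exists (fun r => mscal r m); split; [split|].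
- by move=> x y; rewrite mscalDl.
- by move=> r x; rewrite -mscalA.
- move=> x; rewrite (proj2 gl) hm -(proj2 hl) /=.
  by congr h; apply: functional_extensionality => i; rewrite mulr1.
Qed.

Section SimpleSum.
Variables (J : Type) (phi : J -> K).

(* The direct sum of the simple projectives [e_(phi j) R], [j : J]: each summand is a copy
   of [k] on which [r] acts as [r (phi j)]. *)
Definition simple_car := {f : J -> k | finsupp 0 f}.

Lemma finsuppD (f g : J -> k) : finsupp 0 f -> finsupp 0 g -> finsupp 0 (fun j => f j + g j).
Proof.
move=> [s hs] [t ht]; exists (s ++ t)%list => j hj.
by rewrite (vanish_catl (t := t) hs) // (vanish_catr (s := s) ht) // addr0.
Qed.

Lemma finsuppN (f : J -> k) : finsupp 0 f -> finsupp 0 (fun j => - f j).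
Proof. by move=> [s h]; exists s => j hj; rewrite h ?oppr0. Qed.

Lemma finsuppZ (r : R) (f : J -> k) : finsupp 0 f -> finsupp 0 (fun j => r (phi j) * f j).
Proof. by move=> [s h]; exists s => j hj; rewrite h ?mulr0. Qed.

Definition simple_sum : SMod R.
refine {| mcar := simple_car; mzero := exist _ _ (ex_intro _ nil (fun _ _ => erefl 0));
          madd := fun f g => exist _ _ (finsuppD (proj2_sig f) (proj2_sig g));
          mopp := fun f => exist _ _ (finsuppN (proj2_sig f));
          mscal := fun r f => exist _ _ (finsuppZ r (proj2_sig f)) |};
  intros; apply: sig_ext; apply: functional_extensionality => j /=.
- by rewrite addrA.
- by rewrite addrC.
- by rewrite add0r.
- by rewrite addNr.
- by rewrite mulrDr.
- by rewrite mulrDl.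
- by rewrite mulrA.
- by rewrite mul1r.
Defined.

Definition simple_single (j : J) (c : k) : simple_sum :=
  exist _ (single 0 j c) (ex_intro _ _ (@vanish_single _ _ 0 j c)).

Lemma simple_single0 j : simple_single j 0 = mzero.
Proof. by apply: sig_ext; rewrite /= single_eq0. Qed.

Lemma simple_sum_expand (N : SMod R) (h : simple_sum -> N) : Rlinear h ->
  forall f : simple_sum, h f = fsum 0 (fun j c => h (simple_single j c)) (proj1_sig f).
Proof.
move=> hl [f [s hs]] /=.
have h0 j : h (simple_single j 0) = mzero by rewrite simple_single0 (Rlinear0 hl).
rewrite (fsumE h0 hs).
elim: s f hs => [|i s IH] f hs /=.
  rewrite -(Rlinear0 hl); congr h; apply: sig_ext => /=.
  by apply: functional_extensionality => j; rewrite hs.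
have hs' : vanish 0 (upd f i 0) s.
  move=> j hj; rewrite /upd; case: dec => // nji; apply: hs.
  by move=> [e|e]; [apply: nji|apply: hj].
rewrite -(IH _ hs') -(proj1 hl); congr h; apply: sig_ext => /=.
apply: functional_extensionality => j; rewrite /single /upd.
by case: dec => [e|_] /=; [rewrite e addr0 | rewrite add0r].
Qed.

Lemma simple_sum_projective : projective simple_sum.
Proof.
move=> M N g h gl gs hl.
pose lift j := proj1_sig (constructive_indefinite_description _ (gs (h (simple_single j 1)))).
have hlift j : g (lift j) = h (simple_single j 1).
  exact: (proj2_sig (constructive_indefinite_description _ (gs (h (simple_single j 1))))).
pose psi j c := mscal (single 0 (phi j) c : R) (lift j).
have psi0 j : psi j 0 = mzero by rewrite /psi single_eq0 mscal0r.
exists (fun f => fsum 0 psi (proj1_sig f)); split; [split|].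
- move=> [f hf] [f' hf'] /=.
  apply: (fsumD psi0 (vadd := fun a b => a + b)) => //; first exact: addr0.
  by move=> i u v; rewrite /psi single_add mscalDl.
- move=> r [f hf] /=.
  apply: (fsumZ psi0 (lam := fun j c => r (phi j) * c)) => // [i|i v].
    by rewrite mulr0.
  by rewrite /psi -mscalA single_mul.
- move=> f; rewrite fsum_map // (simple_sum_expand hl); congr fsum.
  apply: functional_extensionality => j; apply: functional_extensionality => c.
  rewrite /psi (proj2 gl) hlift -(proj2 hl); congr h; apply: sig_ext => /=.
  apply: functional_extensionality => i; rewrite /single /upd.
  case: (dec (i = j)) => [e|_] /=; last by rewrite mulr0.
  by rewrite e; case: dec => //= _; rewrite mulr1.
Qed.

Lemma simple_sum_hom_annihilated (X : SMod R) (h : simple_sum -> X) :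
  Rlinear h -> annihilated X -> forall f, h f = mzero.
Proof.
move=> hl hX [f [s hs]].
pose a : R := fun x => if dec (In x (List.map phi s)) then 1 else 0.
have ha : finite_support a.
  by exists (List.map phi s) => x hx; rewrite /a; case: dec.
have -> : exist _ f (ex_intro _ s hs) = mscal a (exist _ f (ex_intro _ s hs) : simple_sum).
  apply: sig_ext; apply: functional_extensionality => j /=; rewrite /a.
  case: (dec (In (phi j) (List.map phi s))) => [_|nj] /=; first by rewrite mul1r.
  by rewrite hs ?mulr0 // => hj; apply: nj; apply: List.in_map.
by rewrite (proj2 hl) hX.
Qed.
End SimpleSum.

Lemma Div_annihilated (X : SMod R) : Div (@Gcof K k) X -> annihilated X.
Proof.
move=> hD a [s hs] m.
pose e : R := fun y => if dec (In y s) then 0 else 1.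
have he : cofinite_support e.
  by exists s => x hx; rewrite /e; case: dec => //= _; exact: oner_neq0.
have [l [hl ->]] := hD _ (Gcof_principal he) m.
elim: l hl => [|[r m'] l IH] hl /=; first exact: mscalr0.
rewrite mscalDr -mscalA IH; last by move=> p hp; apply: hl; right.
have [r' er] : exists r', r = rmul e r' := hl (r, m') (or_introl erefl).
have -> : rmul a r = rzero.
  apply: functional_extensionality => y; rewrite er /= /e.
  by case: dec => [_|ny] /=; rewrite ?mul0r ?mulr0 ?hs ?mul0r.
by rewrite mscal0r madd0.
Qed.

Lemma annihilated_Div (X : SMod R) : annihilated X -> Div (@Gcof K k) X.
Proof.
move=> hX I [_ [a [[s hs] aI]]] m.
pose u : R := fun y => if dec (In y s) then 0 else (a y)^-1.
exists [:: (rmul a u, m)]; split; first by move=> p [<-|[]]; apply: aI.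
rewrite /= madd0r -{1}(mscal1 m); apply: annihilated_scal => //.
exists s => x hx; rewrite /= /u.
by case: dec => //= _; rewrite mulfV ?subrr //; exact: hs.
Qed.

Lemma Div_GcofE (X : SMod R) : Div (@Gcof K k) X <-> annihilated X.
Proof. by split; [exact: Div_annihilated | exact: annihilated_Div]. Qed.

Definition socle2 : SMod R := simple_sum (fun p : K * bool => p.1).

Definition socle2_incl (f : socle2) : regmod R := fun x => proj1_sig f (x, true).

Lemma socle2_incl_linear : Rlinear socle2_incl.
Proof. by []. Qed.

Lemma socle2_incl_image (r : R) : finite_support r <-> exists f, socle2_incl f = r.
Proof.
split.
  move=> [s hs].
  have hf : finsupp 0 (fun p : K * bool => if p.2 then r p.1 else 0).
    exists (List.map (fun x => (x, true)) s) => [[x [|]]] hx //=.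
    by apply: hs => h; apply: hx; apply: (List.in_map (fun x => (x, true))).
  by exists (exist _ _ hf).
move=> [[f [l hl]] <-]; exists (List.map fst l) => x hx /=.
by apply: hl => h; apply: hx; apply: (List.in_map fst l (x, true)).
Qed.

Lemma Dsig_socle2_incl (X : SMod R) : Dsig socle2_incl X <-> annihilated X.
Proof.
split => [hD a [s hs] m | hX h hl].
  pose h (f : socle2) := mscal ((fun x => proj1_sig f (x, false)) : R) m.
  have hl : Rlinear h by split => [x y | r x]; rewrite /h ?mscalDl ?mscalA.
  have [g [gl hg]] := hD h hl.
  have hf : finsupp 0 (fun p : K * bool => if p.2 then 0 else a p.1).
    exists (List.map (fun x => (x, false)) s) => [[x [|]]] hx //=.
    by apply: hs => h'; apply: hx; apply: (List.in_map (fun x => (x, false))).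
  have := hg (exist _ _ hf); rewrite /h /= => <-.
  rewrite -(Rlinear0 gl); congr g.
exists (fun _ => mzero); split; first by split => [? ?|? ?]; rewrite ?madd0 ?mscalr0.
by move=> f; rewrite (simple_sum_hom_annihilated hl hX).
Qed.
End ProductRingModules.

Lemma mlc_linear (R : SRing) (M N : SMod R) (f : M -> N) n c (b : nat -> M) :
  Rlinear f -> mlc n c (fun i => f (b i)) = f (mlc n c b).
Proof.
move=> fl; elim: n => [|n IH] /=; first by rewrite (Rlinear0 fl).
by rewrite IH (proj1 fl) (proj2 fl).
Qed.

Section ProductRingSums.
Variables (K : Type) (k : fieldType).
Notation R := (prodRing K k).

Lemma mlc_prodE n (c b : nat -> R) x :
  (mlc (M := regmod R) n c b : R) x = \sum_(i < n) c i x * b i x.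
Proof. by elim: n => [|n IH] /=; rewrite ?big_ord0 // big_ord_recr /= IH. Qed.

Lemma rsum_prodE p (f : nat -> R) x : rsum p f x = \sum_(j < p) f j x.
Proof. by elim: p => [|p IH] /=; rewrite ?big_ord0 // big_ord_recr /= IH. Qed.

Lemma mlc_mull n (a : R) (c b : nat -> R) :
  mlc (M := regmod R) n (fun i => rmul a (c i)) b = rmul a (mlc (M := regmod R) n c b).
Proof.
apply: functional_extensionality => x; rewrite /= !mlc_prodE mulr_sumr.
by apply: eq_bigr => i _; rewrite mulrA.
Qed.

Lemma mlc_rsum n p (c s : nat -> R) (rels : nat -> nat -> R) (b : nat -> R) :
  (forall i, (i < n)%N -> c i = rsum p (fun j => rmul (s j) (rels j i))) ->
  mlc (M := regmod R) n c b = rsum p (fun j => rmul (s j) (mlc (M := regmod R) n (rels j) b)).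
Proof.
move=> hc; apply: functional_extensionality => x; rewrite mlc_prodE rsum_prodE.
under eq_bigr => i _ do rewrite (hc i (ltn_ord i)) rsum_prodE mulr_suml.
rewrite exchange_big; apply: eq_bigr => j _ /=.
by rewrite mlc_prodE mulr_sumr; apply: eq_bigr => i _; rewrite mulrA.
Qed.

Lemma finite_support_common p (f : nat -> R) : (forall j, (j < p)%N -> finite_support (f j)) ->
  exists F, forall j x, (j < p)%N -> ~ In x F -> f j x = 0.
Proof.
elim: p => [|p IH] hf; first by exists nil.
have [F hF] := IH (fun j hj => hf j (ltnW hj)).
have [s hs] := hf p (ltnSn p).
exists (F ++ s)%list => j x; rewrite ltnS leq_eqVlt => /orP [/eqP -> | hj] hx.
  exact/hs/(fun h => hx (in_or_app _ _ _ (or_intror h))).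
exact/(hF _ _ hj)/(fun h => hx (in_or_app _ _ _ (or_introl h))).
Qed.

Hypothesis K_infinite : infinite_type K.

Lemma exists_notin (s : list K) : exists x, ~ In x s.
Proof.
apply: NNPP => hs; apply: K_infinite; exists s => x.
by apply: NNPP => hx; apply: hs; exists x.
Qed.

Lemma one_not_finite_support : ~ finite_support (rone : R).
Proof.
move=> [s hs]; have [x hx] := exists_notin s.
by have /eqP := hs x hx; rewrite oner_eq0.
Qed.
End ProductRingSums.

Section Quotient.
Variables (k : fieldType) (K : Type) (T : SMod (prodRing K k)) (pi : regmod (prodRing K k) -> T).
Hypotheses (pi_lin : Rlinear pi) (pi_surj : Rsurjective pi)
  (pi_ker : forall r, pi r = mzero <-> finite_support r).
Notation R := (prodRing K k).

Lemma pi_eq (u v : R) : pi u = pi v -> finite_support (radd u (ropp v)).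
Proof.
move=> e; apply/pi_ker; apply: (@madd_cancel _ _ (pi v)).
rewrite madd0r (maddC (pi v)) -(proj1 pi_lin) -e; congr pi.
by apply: functional_extensionality => x /=; rewrite addrNK.
Qed.

Lemma Gen_annihilated (X : SMod R) : Gen T X -> annihilated X.
Proof.
move=> [I [g [gl gs]]] a ha m; have [d <-] := gs m.
rewrite -(proj2 gl) -(Rlinear0 gl); congr g.
apply: sig_ext; apply: functional_extensionality => i /=.
have [r <-] := pi_surj (proj1_sig d i).
by rewrite -(proj2 pi_lin); apply/pi_ker; exact: finite_support_mul.
Qed.

(* The copy of [T] indexed by [x : X] maps [pi r] to [r x]; this is well defined as [A X = 0]. *)
Lemma annihilated_Gen (X : SMod R) : annihilated X -> Gen T X.
Proof.
move=> hX.
pose pre t := proj1_sig (constructive_indefinite_description _ (pi_surj t)).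
have hpre t : pi (pre t) = t.
  exact: (proj2_sig (constructive_indefinite_description _ (pi_surj t))).
have wd (u v : R) (x : X) : pi u = pi v -> mscal u x = mscal v x.
  by move=> e; apply: annihilated_scal => //; exact: pi_eq.
pose psi (x : X) (t : T) := mscal (pre t) x.
have psi0 x : psi x mzero = mzero.
  by rewrite /psi (wd _ rzero) ?mscal0r // hpre (Rlinear0 pi_lin).
exists (mcar X), (fun d => fsum mzero psi (proj1_sig d)); split; [split|].
- move=> [f hf] [f' hf'] /=.
  apply: (fsumD psi0 (vadd := madd)) => //; first exact: madd0.
  by move=> x u v; rewrite /psi -mscalDl; apply: wd; rewrite (proj1 pi_lin) !hpre.
- move=> r [f hf] /=.
  apply: (fsumZ psi0 (lam := fun _ => mscal r)) => // [x|x t]; first exact: mscalr0.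
  by rewrite /psi -mscalA; apply: wd; rewrite (proj2 pi_lin) !hpre.
- move=> x; have hs : @fsupp _ T X (single mzero x (pi rone)).
    by exists [:: x]; exact: vanish_single.
  exists (exist _ _ hs) => /=.
  by rewrite fsum_single // /psi (wd _ rone) ?mscal1 // hpre.
Qed.

Lemma Gen_quotientE (X : SMod R) : Gen T X <-> annihilated X.
Proof. by split; [exact: Gen_annihilated | exact: annihilated_Gen]. Qed.

Lemma quotient_silting : silting T.
Proof.
exists (socle2 K k), (regmod R), (@socle2_incl K k), pi.
split; first exact: socle2_incl_linear.
do 2 (split; first by []).
split; first by move=> y; split => [/pi_ker/socle2_incl_image | /socle2_incl_image/pi_ker].
split; first exact: simple_sum_projective.
split; first exact: regular_projective.
by move=> X; rewrite Gen_quotientE Dsig_socle2_incl.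
Qed.

Lemma quotient_finitely_generated : finitely_generated T.
Proof.
exists 1%N, (fun _ => pi rone) => m; have [r <-] := pi_surj m.
exists (fun _ => r); rewrite /= madd0 -(proj2 pi_lin); congr pi.
by apply: functional_extensionality => i /=; rewrite mulr1.
Qed.

Hypothesis K_infinite : infinite_type K.

(* A section of [pi] would send [pi 1] to an element killed by every [e_x], i.e. to [0]. *)
Lemma quotient_not_projective : ~ projective T.
Proof.
move=> hp.
have [s [sl spi]] := hp _ _ pi id pi_lin pi_surj (conj (fun _ _ => erefl) (fun _ _ => erefl)).
have s0 : s (pi rone) = rzero.
  apply: functional_extensionality => x.
  have ex0 : mscal (single 0 x 1 : R) (pi rone) = mzero.
    rewrite -(proj2 pi_lin); apply/pi_ker.
    exact/finite_support_mul/single_finite_support.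
  have := f_equal (fun r : R => r x) (f_equal s ex0).
  by rewrite (proj2 sl) (Rlinear0 sl) /= /single /upd; case: dec => //= _; rewrite mul1r.
apply: (one_not_finite_support K_infinite); apply/pi_ker.
by rewrite -[pi rone]spi s0 (Rlinear0 pi_lin).
Qed.

(* If [1 = sum c_i b_i] modulo [A], then [e_x c] is a relation for every [x]; but at a point [x]
   outside the supports of finitely many given relations it is not in the span of them. *)
Lemma quotient_not_finitely_presented : ~ finitely_presented T.
Proof.
move=> [n [g [gen [p [rels [hrel hsyz]]]]]].
pose b i := proj1_sig (constructive_indefinite_description _ (pi_surj (g i))).
have gb : g = fun i => pi (b i).
  apply: functional_extensionality => i.
  by rewrite (proj2_sig (constructive_indefinite_description _ (pi_surj (g i)))).
rewrite {}gb in gen hrel hsyz.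
have [c' hc'] := gen (pi rone); rewrite mlc_linear // in hc'.
have [s1 hs1] := pi_eq hc'.
have [F hF] : exists F, forall j x, (j < p)%N -> ~ In x F ->
    (mlc (M := regmod R) n (rels j) b : R) x = 0.
  by apply: finite_support_common => j hj; apply/pi_ker; rewrite -mlc_linear // hrel.
have [x hx] := exists_notin K_infinite (F ++ s1).
pose c i := rmul (single 0 x 1 : R) (c' i).
have hc : mlc n c (fun i => pi (b i)) = mzero.
  rewrite mlc_linear // mlc_mull; apply/pi_ker.
  exact/finite_support_mul/single_finite_support.
have [s hs] := hsyz c hc.
have := f_equal (fun r : R => r x) (mlc_rsum b hs).
rewrite mlc_mull rsum_prodE big1 => [/= | j _]; last first.
  by rewrite /= hF ?mulr0 // => h; apply: hx; apply: in_or_app; left.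
have /eqP : (radd rone (ropp (mlc n c' b)) : R) x = 0.
  by apply: hs1 => h; apply: hx; apply: in_or_app; right.
rewrite /= subr_eq0 /single /upd => /eqP <-; case: dec => //= _.
by rewrite mulr1; apply/eqP; exact: oner_neq0.
Qed.
End Quotient.

Theorem mainTheorem14 (k : fieldType) (K : Type) (HK : infinite_type K)
    (T : SMod (prodRing K k)) (pi : regmod (prodRing K k) -> T)
    (pi_lin : Rlinear pi) (pi_surj : Rsurjective pi)
    (pi_ker : forall r, pi r = mzero <-> finite_support r) :
  gabriel_filter (@Gcof K k) /\ finite_type (@Gcof K k) /\
  silting T /\
  (forall X : SMod (prodRing K k), Gen T X <-> Div (@Gcof K k) X) /\
  finitely_generated T /\ ~ finitely_presented T /\ ~ projective T.
Proof.
split; first exact: Gcof_gabriel.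
split; first exact: Gcof_finite_type.
split; first exact: (quotient_silting pi_lin pi_surj pi_ker).
split; first by move=> X; rewrite (Gen_quotientE pi_lin pi_surj pi_ker) Div_GcofE.
split; first exact: (quotient_finitely_generated pi_lin pi_surj).
split; first exact: (quotient_not_finitely_presented pi_lin pi_surj pi_ker HK).
exact: (quotient_not_projective pi_lin pi_surj pi_ker HK).
Qed.
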